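(* Let $A\subseteq\Gamma$ be a finite set. Then for any integer $k\ge2$, $$\|A\|_{U^{k+1}}\ge\frac{\|A\|_{U^k}^{(3k-2)/(k-1)}}{\|A\|_{U^{k-1}}^{2k/(k-1)}}.$$ In particular, $\|A\|_{U^3}\ge\mathsf{E}^4(A)/|A|^8$.
   Context: $\Gamma$ is an abelian group. For $d\ge1$ the unnormalized Gowers norm of a set is $\|A\|_{U^d}=\sum_{x,h_1,\dots,h_d\in\Gamma}\prod_{\omega\in\{0,1\}^d}A(x+\omega\cdot h)$, where $\omega\cdot h=\sum_i\omega_ih_i$ and $A(\cdot)$ is the indicator function. Thus $\|A\|_{U^1}=|A|^2$ and $\|A\|_{U^2}=\mathsf{E}(A)=|\{a_1-a_2=a_3-a_4:a_i\in A\}|$. *)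

From HB Require Import structures.
From mathcomp Require Import all_boot all_order all_algebra finmap.
From mathcomp Require Import reals exp.
Set Implicit Arguments. Unset Strict Implicit. Unset Printing Implicit Defensive.
Import Order.TTheory GRing.Theory Num.Theory.
Local Open Scope ring_scope.
Local Open Scope fset_scope.

Definition diffset (G : zmodType) (A : {fset G}) : {fset G} :=
  [fset (a - b) | a in A, b in A].

(* Unnormalized Gowers norm
     ||A||_{U^d} = sum_{x,h_1..h_d in G} prod_{w in {0,1}^d} A(x + w.h).
   A summand is nonzero only if x \in A (w = 0) and x + h_i \in A (w = e_i),
   hence h_i \in A - A; the sum is therefore written over that finite support. *)
Definition gowers (G : zmodType) (d : nat) (A : {fset G}) : nat :=
  \sum_(x : A) \sum_(h : {ffun 'I_d -> diffset A})
    \prod_(w : {ffun 'I_d -> bool})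
      nat_of_bool ((val x + \sum_(i < d) (if w i then val (h i) else 0)%R)%R \in A).

(* Let a(h) count the x such that the whole cube x + {0,1}^(k-1).h lies in A,
   for h a (k-1)-tuple of differences, and r(g) the same count in dimension k.
   Then ||A||_{U^(k-1)} = sum a, ||A||_{U^k} = sum a^2 = sum r and
   ||A||_{U^(k+1)} = sum r^2, because summing r over one coordinate of g gives
   a^2 of the opposite face.  Let pi(g) be the product of a over the k faces of g.
   AM-GM over the faces gives sum r pi^(-1/k) <= sum a; Cauchy-Schwarz and the
   discrete Loomis-Whitney inequality give
   (sum r pi^(1/(k-1)))^2 <= sum r^2 (sum a^2)^(k/(k-1)); and Hoelder bounds
   sum r by a product of powers of these two sums in which pi cancels.
   Eliminating gives (sum a^2)^(3k-2) <= (sum r^2)^(k-1) (sum a)^(2k). *)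

From HB Require Import structures.
From mathcomp Require Import all_boot all_order all_algebra finmap.
From mathcomp Require Import reals sequences exp.
From mathcomp Require Import ring lra zify.
Import Order.TTheory GRing.Theory Num.Theory.
Set Implicit Arguments. Unset Strict Implicit. Unset Printing Implicit Defensive.
Local Open Scope ring_scope.

Section PowR.
Variable R : realType.
Implicit Types (x p : R).

Lemma powR_prod (J : finType) (y : J -> R) p :
  (forall j, 0 <= y j) -> (\prod_j y j) `^ p = \prod_j y j `^ p.
Proof.
move=> y0.
suff [] : 0 <= \prod_j y j /\ (\prod_j y j) `^ p = \prod_j y j `^ p by [].
elim/big_rec2: _ => [|j a b _ [a0 IH]]; first by rewrite powR1.
by split; [apply: mulr_ge0|rewrite powRM // IH].
Qed.

Lemma powRVl x p : 0 < x -> x^-1 `^ p = (x `^ p)^-1.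
Proof.
move=> x0; apply: (@mulIf _ (x `^ p)); first by rewrite gt_eqF ?powR_gt0.
by rewrite -powRM ?invr_ge0 ?ltW // mulVf ?gt_eqF // powR1 mulVf ?gt_eqF ?powR_gt0.
Qed.

Lemma powR_exprn x p (n : nat) : 0 <= x -> (x `^ p) ^+ n = x `^ (p * n%:R).
Proof. by move=> x0; rewrite -powR_mulrn ?powR_ge0 // -powRrM. Qed.

Lemma powR_prod_expR (J : finType) (th y : J -> R) :
  (forall j, th j != 0 -> 0 < y j) ->
  \prod_j y j `^ th j = expR (\sum_j th j * ln (y j)).
Proof.
move=> y_gt0; rewrite expR_sum; apply: eq_bigr => j _.
have [->|th_j] := eqVneq (th j) 0; first by rewrite powRr0 mul0r expR0.
by rewrite /powR gt_eqF ?y_gt0.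
Qed.

Lemma powR_exprnE x p (N c : nat) :
  0 <= x -> p * N%:R = c%:R -> (x `^ p) ^+ N = x ^+ c.
Proof. by move=> x0 pN; rewrite powR_exprn // pN powR_mulrn. Qed.

Lemma powR_half_sqr x : 0 <= x -> (x `^ 2^-1) ^+ 2 = x.
Proof. by move=> x0; rewrite powR_exprn // mulVf ?powRr1 // pnatr_eq0. Qed.

Lemma sqr_powR_half x : 0 <= x -> (x ^+ 2) `^ 2^-1 = x.
Proof. by move=> x0; rewrite -powR_mulrn // -powRrM mulfV ?powRr1 // pnatr_eq0. Qed.

Lemma sum_ord_invn (N : nat) : \sum_(i < N.+1) (N.+1%:R : R)^-1 = 1.
Proof. by rewrite sumr_const card_ord -[_ *+ _]mulr_natr mulVf // pnatr_eq0. Qed.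

End PowR.

Section WeightedMeans.
Variables (R : realType) (J : finType) (th : J -> R).
Hypotheses (th_ge0 : forall j, 0 <= th j) (th_sum1 : \sum_j th j = 1).

Lemma weighted_AGM (y : J -> R) : (forall j, 0 <= y j) ->
  \prod_j y j `^ th j <= \sum_j th j * y j.
Proof.
move=> y_ge0; set M := \sum_j th j * y j.
have [/existsP[j /andP[th_j /eqP y_j]]|] :=
  boolP [exists j, (th j != 0) && (y j == 0)].
  rewrite (bigD1 j) //= y_j powR0 // mul0r.
  by apply: sumr_ge0 => i _; apply: mulr_ge0.
rewrite negb_exists => /forallP y_nz.
have y_gt0 j : th j != 0 -> 0 < y j.
  by move=> th_j; have := y_nz j; rewrite th_j lt0r y_ge0 andbT.
have [j th_j] : exists j, th j != 0.
  apply/existsP; apply: contraT; rewrite negb_exists => /forallP th0.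
  by move: th_sum1; rewrite big1 => [/esym/eqP|i _]; [rewrite oner_eq0|apply/eqP/negPn].
have M_gt0 : 0 < M.
  rewrite /M (bigD1 j) //= ltr_pwDl ?mulr_gt0 ?y_gt0 ?lt0r ?th_j ?th_ge0 //.
  by apply: sumr_ge0 => i _; apply: mulr_ge0.
(* ln (y / M) <= y / M - 1, averaged with the weights th *)
have ln_le i : th i * ln (y i) <= th i * ln M + th i * (y i / M - 1).
  have [->|th_i] := eqVneq (th i) 0; first by rewrite !mul0r addr0.
  rewrite -mulrDr ler_wpM2l // -lerBlDl -ln_div ?posrE ?y_gt0 //.
  by rewrite -[X in ln X](subrK 1) addrC le_ln1Dx // ltrBrDl subrr divr_gt0 ?y_gt0.
rewrite powR_prod_expR // -[leRHS]lnK ?posrE // ler_expR.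
apply: le_trans (ler_sum _ (fun i _ => ln_le i)) _.
rewrite big_split /= -mulr_suml th_sum1 mul1r -[leRHS]addr0 lerD2l.
rewrite (eq_bigr (fun i => th i * y i / M - th i)) => [|i _]; last first.
  by rewrite mulrBr mulr1 mulrA.
by rewrite sumrB -mulr_suml th_sum1 divff ?gt_eqF // subrr.
Qed.

Lemma hoelder_sum (I : finType) (x : J -> I -> R) : (forall j i, 0 <= x j i) ->
  \sum_i \prod_j x j i `^ th j <= \prod_j (\sum_i x j i) `^ th j.
Proof.
move=> x_ge0; set X := fun j => \sum_i x j i.
have X_ge0 j : 0 <= X j by apply: sumr_ge0.
have [/existsP[j /andP[th_j /eqP X_j]]|] :=
  boolP [exists j, (th j != 0) && (X j == 0)].
  have x_j i : x j i = 0 by apply: (psumr_eq0P (fun i _ => x_ge0 j i) X_j).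
  rewrite big1 => [|i _]; first by apply: prodr_ge0 => *; apply: powR_ge0.
  by rewrite (bigD1 j) //= x_j powR0 // mul0r.
rewrite negb_exists => /forallP X_nz.
have X_gt0 j : th j != 0 -> 0 < X j.
  by move=> th_j; have := X_nz j; rewrite th_j lt0r X_ge0 andbT.
(* normalise each family by its total mass and apply weighted_AGM pointwise *)
have split_i i : \prod_j x j i `^ th j =
    \prod_j X j `^ th j * \prod_j (x j i / X j) `^ th j.
  rewrite -big_split /=; apply: eq_bigr => j _.
  have [->|th_j] := eqVneq (th j) 0; first by rewrite !powRr0 mulr1.
  by rewrite -powRM ?divr_ge0 // mulrC divfK ?gt_eqF ?X_gt0.
rewrite (eq_bigr _ (fun i _ => split_i i)) -mulr_sumr -[leRHS]mulr1.
apply: ler_wpM2l; first by apply: prodr_ge0 => j _; apply: powR_ge0.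
have mass1 : \sum_i \sum_j th j * (x j i / X j) = 1.
  rewrite exchange_big -th_sum1; apply: eq_bigr => j _.
  have [->|th_j] := eqVneq (th j) 0; first by rewrite big1 // => *; rewrite mul0r.
  by rewrite -mulr_sumr -mulr_suml divff ?mulr1 ?gt_eqF ?X_gt0.
rewrite -[leRHS]mass1; apply: ler_sum => i _.
by apply: weighted_AGM => j; apply: divr_ge0.
Qed.

End WeightedMeans.

Lemma hoelder_sum2 (R : realType) (I : finType) (p q : R) (x y : I -> R) :
  0 <= p -> 0 <= q -> p + q = 1 -> (forall i, 0 <= x i) -> (forall i, 0 <= y i) ->
  \sum_i x i `^ p * y i `^ q <= (\sum_i x i) `^ p * (\sum_i y i) `^ q.
Proof.
move=> p0 q0 pq x0 y0.
pose th b : R := if b then p else q.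
pose z b i := if b then x i else y i.
have th_ge0 b : 0 <= th b by case: b.
have th_sum1 : \sum_b th b = 1 by rewrite big_bool.
have z_ge0 b i : 0 <= z b i by case: b.
have := hoelder_sum th_ge0 th_sum1 z_ge0.
by rewrite big_bool (eq_bigr (fun i => x i `^ p * y i `^ q)) // => i _; rewrite big_bool.
Qed.

Section InsertCoordinate.
Variables (D : Type) (n : nat).

Definition ins (i : 'I_n.+1) (h : {ffun 'I_n -> D}) (y : D) : {ffun 'I_n.+1 -> D} :=
  [ffun j => if unlift i j is Some j' then h j' else y].

Definition del (i : 'I_n.+1) (g : {ffun 'I_n.+1 -> D}) : {ffun 'I_n -> D} :=
  [ffun j => g (lift i j)].

Lemma ins_lift i h y j : ins i h y (lift i j) = h j.
Proof. by rewrite ffunE liftK. Qed.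

Lemma ins_at i h y : ins i h y i = y.
Proof. by rewrite ffunE unlift_none. Qed.

Lemma del_ins i h y : del i (ins i h y) = h.
Proof. by apply/ffunP => j; rewrite ffunE ins_lift. Qed.

Lemma ins_del i g : ins i (del i g) (g i) = g.
Proof. by apply/ffunP => j; rewrite ffunE; case: unliftP => [j' ->|->]; rewrite ?ffunE. Qed.

End InsertCoordinate.

Lemma big_ins (R : Type) (idx : R) (op : Monoid.com_law idx) (D : finType) n
    (i : 'I_n.+1) (F : {ffun 'I_n.+1 -> D} -> R) :
  \big[op/idx]_g F g = \big[op/idx]_h \big[op/idx]_y F (ins i h y).
Proof.
rewrite pair_big (reindex (fun p => ins i p.1 p.2)) //=.
by exists (fun g => (del i g, g i)) => [[h y]|g] _; rewrite ?del_ins ?ins_at ?ins_del.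
Qed.

Lemma del_ins_max (D : Type) n (i : 'I_n.+1) (g : {ffun 'I_n.+1 -> D}) (y : D) :
  del (widen_ord (leqnSn _) i) (ins ord_max g y) = ins ord_max (del i g) y.
Proof.
apply/ffunP => j; rewrite !ffunE.
case: (unliftP ord_max j) => [j' ->|->].
  have -> : lift (widen_ord (leqnSn _) i) (lift ord_max j') = lift ord_max (lift i j').
    by apply: val_inj; rewrite /= /bump; move: (ltn_ord i) (ltn_ord j'); lia.
  by rewrite !liftK ffunE.
have -> : lift (widen_ord (leqnSn _) i) ord_max = ord_max.
  by apply: val_inj; rewrite /= /bump; move: (ltn_ord i); lia.
by rewrite unlift_none.
Qed.

Section LoomisWhitney.
Variables (R : realType) (D : finType).

Lemma loomis_whitney_fiber m (F : {ffun 'I_m.+2 -> D} -> R) (g : {ffun 'I_m.+2 -> D}) :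
  (forall h, 0 <= F h) ->
  \sum_y \prod_(i < m.+3) F (del i (ins ord_max g y)) `^ m.+2%:R^-1 <=
  F g `^ m.+2%:R^-1 * \prod_(j < m.+2) (\sum_y F (ins ord_max (del j g) y)) `^ m.+2%:R^-1.
Proof.
move=> F_ge0; set th := m.+2%:R^-1.
have peel y : \prod_(i < m.+3) F (del i (ins ord_max g y)) `^ th =
    F g `^ th * \prod_(j < m.+2) F (ins ord_max (del j g) y) `^ th.
  rewrite big_ord_recr /= del_ins mulrC; congr (_ * _).
  by apply: eq_bigr => j _; rewrite del_ins_max.
rewrite (eq_bigr _ (fun y _ => peel y)) -mulr_sumr.
apply: ler_wpM2l; first exact: powR_ge0.
apply: hoelder_sum => // [j|]; first by rewrite invr_ge0.
exact: sum_ord_invn.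
Qed.

Lemma loomis_whitney0 (F : {ffun 'I_1 -> D} -> R) :
  \sum_(g : {ffun 'I_2 -> D}) \prod_(i < 2) F (del i g) = (\sum_h F h) ^+ 2.
Proof.
have sumF z : \sum_y F (ins ord_max z y) = \sum_h F h.
  rewrite [RHS](big_ins _ ord_max) (eq_bigr (fun=> \sum_y F (ins ord_max z y))).
    by rewrite sumr_const card_ffun card_ord expn0.
  by move=> z' _; rewrite (_ : z' = z) //; apply/ffunP => -[].
rewrite (big_ins _ ord_max) expr2 mulr_suml; apply: eq_bigr => g _.
rewrite -(sumF (del ord0 g)) mulr_sumr; apply: eq_bigr => y _.
by rewrite big_ord_recr big_ord1 /= (del_ins_max ord0) del_ins mulrC.
Qed.

Lemma loomis_whitney m (F : {ffun 'I_m.+1 -> D} -> R) : (forall h, 0 <= F h) ->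
  \sum_(g : {ffun 'I_m.+2 -> D}) \prod_(i < m.+2) F (del i g) `^ m.+1%:R^-1
    <= (\sum_h F h) `^ (m.+2%:R / m.+1%:R).
Proof.
elim: m F => [|m IH] F F_ge0.
  rewrite divr1 powR_mulrn ?sumr_ge0 // -loomis_whitney0 le_eqVlt; apply/predU1P; left.
  by apply: eq_bigr => g _; apply: eq_bigr => i _; rewrite invr1 powRr1.
pose H z := \sum_y F (ins ord_max z y).
have H_ge0 z : 0 <= H z by apply: sumr_ge0.
have sumH : \sum_z H z = \sum_h F h by rewrite [RHS](big_ins _ ord_max).
have SF_ge0 : 0 <= \sum_h F h by apply: sumr_ge0.
have m_ge0 : 0 <= m%:R :> R by [].
set th : R := m.+2%:R^-1; set th' : R := m.+1%:R / m.+2%:R.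
have [th_ge0 th'_ge0] : 0 <= th /\ 0 <= th' by rewrite invr_ge0 divr_ge0.
have thth' : th + th' = 1 by rewrite /th /th'; field; lra.
pose Y (g : {ffun 'I_m.+2 -> D}) := \prod_(j < m.+2) H (del j g) `^ m.+1%:R^-1.
have Y_ge0 g : 0 <= Y g by apply: prodr_ge0 => j _; apply: powR_ge0.
have YE g : Y g `^ th' = \prod_(j < m.+2) H (del j g) `^ th.
  rewrite powR_prod => [|j]; last exact: powR_ge0.
  apply: eq_bigr => j _; rewrite -powRrM /th /th' mulrA mulVf ?mul1r //.
  by rewrite pnatr_eq0.
have sumY : (\sum_g Y g) `^ th' <= \sum_h F h.
  apply: le_trans (_ : ((\sum_h F h) `^ (m.+2%:R / m.+1%:R)) `^ th' <= _).
    by rewrite ge0_ler_powR ?nnegrE ?sumr_ge0 ?powR_ge0 -?sumH ?IH.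
  rewrite -powRrM (_ : _ * th' = 1) ?powRr1 //.
  by rewrite /th'; field; lra.
rewrite (big_ins _ ord_max).
apply: le_trans (ler_sum _ (fun g _ => loomis_whitney_fiber g F_ge0)) _.
under eq_bigr do rewrite -/(H _) -YE.
apply: le_trans (hoelder_sum2 th_ge0 th'_ge0 thth' F_ge0 Y_ge0) _.
have -> : m.+3%:R / m.+2%:R = th + 1 :> R by rewrite /th; field; lra.
rewrite powRD ?powRr1 //; last by rewrite gt_eqF ?implyTb ?addr_gt0 ?invr_gt0.
by apply: ler_wpM2l; first exact: powR_ge0.
Qed.

End LoomisWhitney.

Section FaceInequality.
Variables (R : realType) (D : finType) (m : nat).
Variables (a : {ffun 'I_m.+1 -> D} -> R) (r : {ffun 'I_m.+2 -> D} -> R).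
Hypotheses (a_ge0 : forall h, 0 <= a h) (r_ge0 : forall g, 0 <= r g).
Hypothesis sum_r_fiber : forall (i : 'I_m.+2) h, \sum_y r (ins i h y) = a h ^+ 2.

Local Notation n := (m.+1%:R : R).
Local Notation k := (m.+2%:R : R).
Local Notation pi g := (\prod_(i < m.+2) a (del i g)).

Lemma sum_r_sum_sqr : \sum_g r g = \sum_h a h ^+ 2.
Proof. by rewrite (big_ins _ ord_max); apply: eq_bigr => h _. Qed.

Lemma r_le_face i g : r g <= a (del i g) ^+ 2.
Proof. by rewrite -(sum_r_fiber i) (bigD1 (g i)) //= ins_del lerDl sumr_ge0. Qed.

Lemma face_gt0 i g : r g != 0 -> 0 < a (del i g).
Proof.
move=> r_nz; rewrite lt0r a_ge0 andbT; apply: contra r_nz => /eqP a0.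
by have := r_le_face i g; rewrite a0 expr0n /= eq_le r_ge0 andbT.
Qed.

Lemma sum_r_div_face i : \sum_g r g / a (del i g) = \sum_h a h.
Proof.
rewrite (big_ins _ i); apply: eq_bigr => h _.
under eq_bigr do rewrite del_ins.
rewrite -mulr_suml sum_r_fiber expr2.
by have [->|a_nz] := eqVneq (a h) 0; rewrite ?mul0r ?mulfK.
Qed.

Lemma sum_r_div_root_le : \sum_g r g / pi g `^ k^-1 <= \sum_h a h.
Proof.
have k_gt0 : 0 < k by rewrite ltr0n.
(* AM-GM turns the geometric mean of the faces into their arithmetic mean *)
have AGM g : r g / pi g `^ k^-1 <= \sum_(i < m.+2) k^-1 * (r g / a (del i g)).
  have [->|r_nz] := eqVneq (r g) 0.
    by rewrite mul0r; apply: sumr_ge0 => i _; rewrite mul0r mulr0.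
  have inv_face i : (a (del i g))^-1 `^ k^-1 = (a (del i g) `^ k^-1)^-1.
    by rewrite powRVl ?face_gt0.
  rewrite powR_prod // -prodfV.
  under eq_bigr do rewrite -inv_face.
  under [leRHS]eq_bigr do rewrite mulrCA.
  rewrite -mulr_sumr; apply: ler_wpM2l => //.
  apply: weighted_AGM => [i||i]; rewrite ?invr_ge0 ?a_ge0 ?ltW //.
  exact: sum_ord_invn.
apply: le_trans (ler_sum _ (fun g _ => AGM g)) _.
rewrite exchange_big /=.
under eq_bigr do rewrite -mulr_sumr sum_r_div_face.
by rewrite -mulr_suml sum_ord_invn mul1r.
Qed.

Lemma sum_r_mul_root_sq_le :
  (\sum_g r g * pi g `^ n^-1) ^+ 2 <= (\sum_g r g ^+ 2) * (\sum_h a h ^+ 2) `^ (k / n).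
Proof.
pose L g := \prod_(i < m.+2) (a (del i g) ^+ 2) `^ n^-1.
have L_ge0 g : 0 <= L g by apply: prodr_ge0 => i _; apply: powR_ge0.
have sumL_ge0 : 0 <= \sum_g L g by apply: sumr_ge0.
have T_ge0 : 0 <= \sum_g r g ^+ 2 by apply: sumr_ge0 => g _; apply: sqr_ge0.
have half_ge0 : (0 : R) <= 2^-1 by rewrite invr_ge0.
have halves : (2^-1 + 2^-1 : R) = 1 by field.
have CS := hoelder_sum2 half_ge0 half_ge0 halves (fun g => sqr_ge0 (r g)) L_ge0.
have LE g : L g `^ 2^-1 = pi g `^ n^-1.
  rewrite powR_prod => [|i]; last exact: powR_ge0.
  rewrite powR_prod //; apply: eq_bigr => i _.
  by rewrite powRAC sqr_powR_half.
have CSE : \sum_g (r g ^+ 2) `^ 2^-1 * L g `^ 2^-1 = \sum_g r g * pi g `^ n^-1.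
  by apply: eq_bigr => g _; rewrite sqr_powR_half // LE.
rewrite CSE in CS.
apply: le_trans (_ : ((\sum_g r g ^+ 2) `^ 2^-1 * (\sum_g L g) `^ 2^-1) ^+ 2 <= _).
  apply: lerXn2r; rewrite ?nnegrE ?mulr_ge0 ?powR_ge0 //.
  by apply: sumr_ge0 => g _; rewrite mulr_ge0 ?powR_ge0.
rewrite exprMn !powR_half_sqr //; apply: ler_wpM2l => //.
apply: loomis_whitney => h; apply: sqr_ge0.
Qed.

Local Notation s := ((2 * m.+1).+1%:R : R).

Lemma sum_r_le_interpolation :
  \sum_g r g <=
    (\sum_g r g * pi g `^ n^-1) `^ (n / s) * (\sum_g r g / pi g `^ k^-1) `^ (k / s).
Proof.
have [n_gt0 k_gt0 s_gt0] : [/\ 0 < n, 0 < k & 0 < s] by rewrite !ltr0n.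
have m_ge0 : 0 <= m%:R :> R by [].
have weights1 : n / s + k / s = 1 by field; lra.
(* the exponents of pi cancel: (1 / n) (n / s) = (1 / k) (k / s) *)
have split_r g : r g = (r g * pi g `^ n^-1) `^ (n / s) * (r g / pi g `^ k^-1) `^ (k / s).
  have [->|r_nz] := eqVneq (r g) 0.
    by rewrite !mul0r powR0 ?mul0r // mulf_neq0 ?invr_eq0 ?gt_eqF.
  have pi_gt0 : 0 < pi g by apply: prodr_gt0 => i _; apply: face_gt0.
  have [e_n e_k] : n^-1 * (n / s) = s^-1 /\ k^-1 * (k / s) = s^-1.
    by rewrite !mulKf ?gt_eqF.
  rewrite !powRM ?invr_ge0 ?powR_ge0 ?r_ge0 ?ltW // powRVl ?powR_gt0 //.
  rewrite -!powRrM e_n e_k mulrACA mulfV ?mulr1 ?gt_eqF ?powR_gt0 //.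
  by rewrite -powRD ?weights1 ?powRr1 // r_nz implybT.
rewrite (eq_bigr _ (fun g _ => split_r g)).
apply: hoelder_sum2; rewrite ?divr_ge0 ?ltW // => g.
  by rewrite mulr_ge0 ?powR_ge0.
by rewrite divr_ge0 ?powR_ge0.
Qed.

Lemma face_inequality :
  (\sum_h a h ^+ 2) ^+ (3 * m.+1).+1 <=
    (\sum_g r g ^+ 2) ^+ m.+1 * (\sum_h a h) ^+ (2 * m.+1).+2.
Proof.
set U := \sum_h a h; set V := \sum_h a h ^+ 2; set T := \sum_g r g ^+ 2.
set Q := \sum_g r g * pi g `^ n^-1; set P := \sum_g r g / pi g `^ k^-1.
have [U_ge0 V_ge0 T_ge0] : [/\ 0 <= U, 0 <= V & 0 <= T].
  by split; apply: sumr_ge0 => *; rewrite ?sqr_ge0.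
have Q_ge0 : 0 <= Q by apply: sumr_ge0 => g _; rewrite mulr_ge0 ?powR_ge0.
have P_ge0 : 0 <= P by apply: sumr_ge0 => g _; rewrite divr_ge0 ?powR_ge0.
have m_ge0 : 0 <= m%:R :> R by [].
pose N := ((3 * m.+1).+1 + m.+2)%N.
have VN : V ^+ N <= Q ^+ (2 * m.+1) * P ^+ (2 * m.+1).+2.
  have VQP : V <= Q `^ (n / s) * P `^ (k / s) by rewrite /V -sum_r_sum_sqr sum_r_le_interpolation.
  apply: le_trans (_ : (Q `^ (n / s) * P `^ (k / s)) ^+ N <= _).
    by rewrite lerXn2r ?nnegrE ?mulr_ge0 ?powR_ge0.
  rewrite exprMn (powR_exprnE (c := (2 * m.+1)%N)) ?(powR_exprnE (c := (2 * m.+1).+2)) //.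
    by rewrite /N; field; lra.
  by rewrite /N; field; lra.
have QT : Q ^+ (2 * m.+1) <= T ^+ m.+1 * V ^+ m.+2.
  apply: le_trans (_ : (T * V `^ (k / n)) ^+ m.+1 <= _).
    by rewrite exprM lerXn2r ?nnegrE ?sqr_ge0 ?mulr_ge0 ?powR_ge0 // sum_r_mul_root_sq_le.
  by rewrite exprMn (powR_exprnE (c := m.+2)) // divfK // pnatr_eq0.
have PU : P ^+ (2 * m.+1).+2 <= U ^+ (2 * m.+1).+2.
  by rewrite lerXn2r ?nnegrE // sum_r_div_root_le.
have [->|V_nz] := eqVneq V 0; first by rewrite expr0n mulr_ge0 ?exprn_ge0.
(* V ^+ N <= Q ^+ (2 n) * P ^+ (2 k) <= (T ^+ n * V ^+ k) * U ^+ (2 k); cancel V ^+ k *)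
have VN' : V ^+ (3 * m.+1).+1 * V ^+ m.+2 <=
    (T ^+ m.+1 * U ^+ (2 * m.+1).+2) * V ^+ m.+2.
  rewrite -exprD [leRHS]mulrAC; apply: le_trans VN _.
  by rewrite ler_pM ?exprn_ge0.
by rewrite ler_pM2r ?exprn_gt0 // lt0r V_nz in VN'.
Qed.

End FaceInequality.

Lemma prod_nat_of_bool (T : finType) (P : pred T) :
  (\prod_w nat_of_bool (P w))%N = [forall w, P w].
Proof.
have [/forallP P_all|] := boolP [forall w, P w]; first by rewrite big1 // => w _; rewrite P_all.
by rewrite negb_forall => /existsP[w /negbTE Pw]; rewrite (bigD1 w) //= Pw.
Qed.

Lemma sum_val_eq (T : choiceType) (S : {fset T}) (t : T) :
  (\sum_(z : S) (val z == t))%N = (t \in S).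
Proof.
have [tS|tS] := boolP (t \in S); last first.
  by rewrite big1 // => z _; case: eqP => // zt; rewrite -zt (valP z) in tS.
rewrite (bigD1 [` tS]%fset) //= eqxx big1 // => z /eqP z_ne; case: eqP => // zt.
by case: z_ne; exact: val_inj.
Qed.

Section GowersCubes.
Variables (G : zmodType) (A : {fset G}).

Lemma mem_diffset a b : a \in A -> b \in A -> a - b \in diffset A.
Proof. by move=> aA bA; apply/imfset2P; exists a => //; exists b. Qed.

Definition cube d (h : {ffun 'I_d -> diffset A}) (x : G) : bool :=
  [forall w : {ffun 'I_d -> bool},
     x + \sum_(i < d) (if w i then val (h i) else 0) \in A].

Definition cube_count d (h : {ffun 'I_d -> diffset A}) : nat :=
  (\sum_(x : A) cube h (val x))%N.

Lemma gowersE d : gowers d A = (\sum_(h : {ffun 'I_d -> diffset A}) cube_count h)%N.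
Proof.
rewrite /gowers exchange_big /=; apply: eq_bigr => h _.
by apply: eq_bigr => x _; rewrite prod_nat_of_bool.
Qed.

Lemma cube_mem d (h : {ffun 'I_d -> diffset A}) x : cube h x -> x \in A.
Proof.
move/forallP/(_ [ffun=> false]).
by rewrite big1 ?addr0 // => j _; rewrite ffunE.
Qed.

Lemma cube_ins d (i : 'I_d.+1) (h : {ffun 'I_d -> diffset A}) (y : diffset A) x :
  cube (ins i h y) x = cube h x && cube h (x + val y).
Proof.
have sum_ins (w : {ffun 'I_d.+1 -> bool}) :
    \sum_(j < d.+1) (if w j then val (ins i h y j) else 0) =
    (if w i then val y else 0) + \sum_(j < d) (if del i w j then val (h j) else 0).
  rewrite (bigD1_ord i) //= ins_at; congr (_ + _).
  by apply: eq_bigr => j _; rewrite ins_lift ffunE.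
apply/forallP/andP => [cube_y|[/forallP cube0 /forallP cube1] w].
  split; apply/forallP => w.
    by have := cube_y (ins i w false); rewrite sum_ins ins_at del_ins add0r.
  by have := cube_y (ins i w true); rewrite sum_ins ins_at del_ins addrA.
by rewrite sum_ins; case: (w i); rewrite ?add0r ?addrA.
Qed.

Lemma sum_cube_shift d (h : {ffun 'I_d -> diffset A}) (x : A) :
  (\sum_(y : diffset A) cube h (val x + val y))%N = cube_count h.
Proof.
(* each z in A is hit exactly once, by the difference y = z - x *)
have split_y (y : diffset A) : nat_of_bool (cube h (val x + val y)) =
    (\sum_(z : A) (val z == (val x + val y)%R) * cube h (val z))%N.
  transitivity (\sum_(z : A) (val z == (val x + val y)%R) * cube h (val x + val y))%N.
    rewrite -big_distrl /= sum_val_eq.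
    by case: (boolP (cube h _)) => [/cube_mem ->|]; rewrite ?muln0 ?muln1.
  by apply: eq_bigr => z _; case: eqP => [->|].
rewrite (eq_bigr _ (fun y _ => split_y y)) exchange_big /=; apply: eq_bigr => z _.
rewrite -big_distrl /= (eq_bigr (fun y : diffset A => nat_of_bool (val y == val z - val x))).
  by rewrite sum_val_eq mem_diffset ?valP //= mul1n.
by move=> y _; rewrite [val y == _]eq_sym subr_eq addrC.
Qed.

Lemma sum_cube_count_ins d (i : 'I_d.+1) (h : {ffun 'I_d -> diffset A}) :
  (\sum_y cube_count (ins i h y))%N = (cube_count h ^ 2)%N.
Proof.
rewrite -mulnn {1}/cube_count big_distrl exchange_big /=; apply: eq_bigr => x _.
rewrite -(sum_cube_shift h x) big_distrr /=; apply: eq_bigr => y _.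
by rewrite cube_ins; case: (cube h _); case: (cube h _).
Qed.

Lemma gowersS d : gowers d.+1 A = (\sum_(h : {ffun 'I_d -> diffset A}) cube_count h ^ 2)%N.
Proof.
rewrite gowersE (big_ins _ ord_max); apply: eq_bigr => h _.
exact: sum_cube_count_ins.
Qed.

Lemma gowers1 : gowers 1 A = (#|` A| ^ 2)%N.
Proof.
rewrite gowersS (eq_bigr (fun=> #|` A| ^ 2)%N) => [|h _].
  by rewrite sum_nat_const card_ffun card_ord expn0 mul1n.
rewrite /cube_count (eq_bigr (fun=> 1%N)) ?sum1_card ?cardfE // => x _.
by rewrite (_ : cube h _); last by apply/forallP => w; rewrite big_ord0 addr0 (valP x).
Qed.

Lemma gowers_face_inequality (R : realType) m :
  ((gowers m.+2 A)%:R : R) ^+ (3 * m.+1).+1 <=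
    (gowers m.+3 A)%:R ^+ m.+1 * (gowers m.+1 A)%:R ^+ (2 * m.+1).+2.
Proof.
rewrite (gowersS m.+1) (gowersS m.+2) (gowersE m.+1) !natr_sum.
under eq_bigr do rewrite natrX.
under [X in _ <= X ^+ _ * _]eq_bigr do rewrite natrX.
apply: face_inequality => // i h.
by rewrite -natr_sum sum_cube_count_ins natrX.
Qed.

End GowersCubes.

Lemma powR_ratio_le (R : realType) (x y z : R) (p q n : nat) :
  0 <= x -> 0 <= y -> 0 <= z -> (0 < n)%N ->
  x ^+ p <= y ^+ n * z ^+ q -> x `^ (p%:R / n%:R) / z `^ (q%:R / n%:R) <= y.
Proof.
move=> x0 y0 z0 n_gt0 le_xyz.
have [->|zq_nz] := eqVneq (z `^ (q%:R / n%:R)) 0; first by rewrite invr0 mulr0.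
rewrite ler_pdivrMr ?lt0r ?zq_nz ?powR_ge0 //.
rewrite -(ler_pXn2r n_gt0) ?nnegrE ?mulr_ge0 ?powR_ge0 // exprMn.
by rewrite (powR_exprnE (c := p)) ?(powR_exprnE (c := q)) // divfK // pnatr_eq0 -lt0n.
Qed.

Unset Implicit Arguments.

Theorem proposition7 (R : realType) (G : zmodType) (A : {fset G}) :
  (forall k : nat, (2 <= k)%N ->
     ((gowers k.+1 A)%:R : R) >=
       ((gowers k A)%:R `^ ((3 * k - 2)%:R / (k - 1)%:R))
       / ((gowers k.-1 A)%:R `^ ((2 * k)%:R / (k - 1)%:R)))
  /\
  ((gowers 3 A)%:R : R) >= ((gowers 2 A)%:R ^+ 4) / ((#|` A|)%:R ^+ 8).
Proof.
split=> [[|[|m]] // _|].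
  have -> : (3 * m.+2 - 2 = (3 * m.+1).+1)%N by lia.
  have -> : (2 * m.+2 = (2 * m.+1).+2)%N by lia.
  have -> : (m.+2 - 1 = m.+1)%N by lia.
  exact: powR_ratio_le (gowers_face_inequality A R m).
have := gowers_face_inequality A R 0; rewrite gowers1 natrX -exprM expr1 => le_V.
have [->|A_nz] := eqVneq (#|` A|%:R : R) 0; first by rewrite expr0n invr0 mulr0.
by rewrite ler_pdivrMr ?exprn_gt0 // lt0r A_nz /=.
Qed.
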